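(* Let $p,q,r$ be integers with $1<p<q<r$, $p$ odd and $pq+pr-qr=1$. Then $$\max_{1\le m\le n_p}F_{p,q}(1,m)=F_{p,q}\big(1,\,t_{p,q}+\min\{\alpha_{p,q},1\}\big)=(t_{p,q}+1)(n_p+\alpha_{p,q}).$$
   Context: $n_p=(p-1)/2$; $t_{p,q}$, $\alpha_{p,q}$ are quotient and remainder of $n_p$ divided by $q-p$ ($n_p=t_{p,q}(q-p)+\alpha_{p,q}$, $0\le\alpha_{p,q}<q-p$). $F_{p,q}(x,y)=\frac{1}{4}\left(-(q+r)x^2+4qxy-4(q-p)y^2-4y+q+r\right)$; $m$ ranges over integers. *)

From mathcomp Require Import all_boot all_order all_algebra.
Set Implicit Arguments. Unset Strict Implicit. Unset Printing Implicit Defensive.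
Import Order.TTheory GRing.Theory Num.Theory.
Local Open Scope ring_scope.

Definition n_ (p : int) : int := ((p - 1) %/ 2)%Z.
Definition t_ (p q : int) : int := ((n_ p) %/ (q - p))%Z.
Definition alpha_ (p q : int) : int := ((n_ p) %% (q - p))%Z.

Definition F (p q r : int) (x y : int) : rat :=
  (1 / 4) * ( - (q + r)%:~R * (x%:~R) ^+ 2 + 4 * q%:~R * x%:~R * y%:~R
              - 4 * (q - p)%:~R * (y%:~R) ^+ 2 - 4 * y%:~R + (q + r)%:~R).

Definition maxF1 (p q r : int) : rat :=
  \big[Num.max/F p q r 1 1]_(1 <= i < (`|n_ p|%N).+1) F p q r 1 (i%:Z).

From mathcomp Require Import all_boot all_order all_algebra zify ring.
Set Implicit Arguments. Unset Strict Implicit.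
Import Order.TTheory GRing.Theory Num.Theory.
Local Open Scope ring_scope.

(* Writing p = 2n + 1 and d = q - p, the function F(1, m) equals the integer
   quadratic g(m) = m (2n + d) - d m^2, which does not involve r.  With
   n = t d + a and 0 <= a < d one has
     (t + 1)(n + a) - g(m) = (m - t - 1)(d (m - t) - 2a),
   and for every integer m the two factors have the same sign: both are
   nonpositive when m <= t, the first vanishes at m = t + 1, and both are
   positive when m >= t + 2 because d (m - t) >= 2d > 2a.  The bound is attained
   at m = t + 1 when a > 0 and at m = t when a = 0, and this m lies in [1, n]. *)

Lemma odd_double_n_ (p : int) : odd `|p|%N -> p = 2 * n_ p + 1.
Proof. by rewrite /n_ => p_odd; have := odd_double_half `|p|%N; rewrite p_odd; lia. Qed.

Lemma n_divE (p q : int) : n_ p = t_ p q * (q - p) + alpha_ p q.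
Proof. exact: divz_eq. Qed.

Lemma alpha_ge0 (p q : int) : p < q -> 0 <= alpha_ p q.
Proof. by rewrite /alpha_; lia. Qed.

Lemma alpha_lt (p q : int) : p < q -> alpha_ p q < q - p.
Proof. by rewrite /alpha_; lia. Qed.

Lemma F1E (p q r y : int) : F p q r 1 y = (y * (q - 1) - (q - p) * y ^+ 2)%:~R.
Proof. by rewrite /F !(intrD, intrM, intrN, intrB); field. Qed.

Section IntegerQuadratic.

Variables (d n t a : int).
Hypotheses (n_divE : n = t * d + a) (a_ge0 : 0 <= a) (a_lt_d : a < d).

Lemma quadratic_gapE (m : int) :
  (t + 1) * (n + a) - (m * (2 * n + d) - d * m ^+ 2)
    = (m - t - 1) * (d * (m - t) - 2 * a).
Proof. by rewrite n_divE; ring. Qed.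

Lemma quadratic_le (m : int) : m * (2 * n + d) - d * m ^+ 2 <= (t + 1) * (n + a).
Proof.
rewrite -subr_ge0 quadratic_gapE.
have [le_mt | lt_tm] := lerP m t; first by apply: mulr_le0; nia.
have [-> | ne_mt1] := eqVneq m (t + 1).
  by rewrite (_ : t + 1 - t - 1 = 0) ?mul0r; last ring.
by apply: mulr_ge0; nia.
Qed.

Lemma quadratic_max (m := t + Num.min a 1) :
  m * (2 * n + d) - d * m ^+ 2 = (t + 1) * (n + a).
Proof.
apply/eqP; rewrite -subr_eq0 -oppr_eq0 opprB quadratic_gapE /m; apply/eqP.
have [-> | a_gt0] := eqVneq a 0; first by rewrite (minElt 0 1) ltr01; ring.
by rewrite (minEge a 1) ifT; [ring | lia].
Qed.

Lemma quadratic_argmax_range : 1 <= n -> 1 <= t + Num.min a 1 <= n.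
Proof.
move=> n_ge1; have [a0 | a_gt0] := eqVneq a 0.
  by rewrite a0 (minElt 0 1) ltr01 addr0; nia.
by rewrite (minEge a 1) ifT; nia.
Qed.

End IntegerQuadratic.

Theorem proposition3p5 (p q r : int) :
  1 < p -> p < q -> q < r -> odd `|p|%N -> p * q + p * r - q * r = 1 ->
  maxF1 p q r = F p q r 1 (t_ p q + Num.min (alpha_ p q) 1) /\
  F p q r 1 (t_ p q + Num.min (alpha_ p q) 1)
    = ((t_ p q + 1) * (n_ p + alpha_ p q))%:~R.
Proof.
move=> p_gt1 p_lt_q _ p_odd _.
have p_eq := odd_double_n_ p_odd; have nE := n_divE p q.
have a_ge0 := alpha_ge0 p_lt_q; have a_lt := alpha_lt p_lt_q.
have n_ge1 : 1 <= n_ p by lia.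
have F1_quadratic y :
    F p q r 1 y = (y * (2 * n_ p + (q - p)) - (q - p) * y ^+ 2)%:~R.
  by rewrite F1E; congr (_ * _ - _)%:~R; lia.
have /andP[m_ge1 m_le_n] := quadratic_argmax_range nE a_ge0 a_lt n_ge1.
have max_val : F p q r 1 (t_ p q + Num.min (alpha_ p q) 1)
    = ((t_ p q + 1) * (n_ p + alpha_ p q))%:~R.
  by rewrite F1_quadratic (quadratic_max nE a_ge0 a_lt).
split=> //; apply/le_anti/andP; split.
  by apply: bigmax_le => [|i _]; rewrite max_val F1_quadratic ler_int (quadratic_le nE a_ge0 a_lt).
set m := t_ p q + _ in m_ge1 m_le_n *.
have -> : m = `|m|%N by rewrite gez0_abs //; lia.
by apply: le_bigmax_seq; rewrite // mem_index_iota; lia.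
Qed.
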